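(* Let $G$ be a finite group acting $2$-transitively on a finite set $X$, let $x\in X$, and suppose the stabilizer $H=\mathrm{Stab}_G(x)$ is mixable. Then $G$ is mixable, and \[\mathrm{mixlen}(G)\le \mathrm{mixlen}(H)+\mathrm{mixlen}(H,X\setminus\{x\})+1.\]
   Context: For a finite group $G$, a random subproduct is a random element $g_1^{\epsilon_1}\cdots g_k^{\epsilon_k}$ with $g_1,\dots,g_k\in G$ fixed and $\epsilon_1,\dots,\epsilon_k$ independent Bernoulli random variables, $\epsilon_i\sim\mathrm{Ber}(p_i)$, $p_i\in[0,1]$; $k$ is its length. $G$ is mixable if some random subproduct is exactly uniform on $G$, and $\mathrm{mixlen}(G)$ is the minimal such length. For a transitive action of a group $H$ on a finite set $Y$, the action is mixable if for some (equivalently every) $y_0\in Y$ there is a random subproduct $\mathbf{h}$ in $H$ with $\mathbf{h}y_0$ uniform on $Y$, and $\mathrm{mixlen}(H,Y)$ is the minimal length of such a random subproduct. (By $2$-transitivity, $H$ acts transitively on $X\setminus\{x\}$.) *)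

From HB Require Import structures.
From mathcomp Require Import all_boot all_order all_algebra all_fingroup all_solvable.
From mathcomp Require Import boolp reals.
Set Implicit Arguments. Unset Strict Implicit. Unset Printing Implicit Defensive.
Import Order.TTheory GRing.Theory Num.Theory.

Local Open Scope ring_scope.

Section RandomSubproducts.
Variables (R : realType) (gT : finGroupType).

Definition subprod k (g : 'I_k -> gT) (e : {ffun 'I_k -> bool}) : gT :=
  (\prod_(i < k) (if e i then g i else 1))%g.

Definition bern_weight k (p : 'I_k -> R) (e : {ffun 'I_k -> bool}) : R :=
  \prod_(i < k) (if e i then p i else 1 - p i).

Definition subprod_law k (g : 'I_k -> gT) (p : 'I_k -> R) (z : gT) : R :=
  \sum_(e : {ffun 'I_k -> bool} | subprod g e == z) bern_weight p e.

Definition probs k (p : 'I_k -> R) := forall i, 0 <= p i <= 1.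

Definition mixes_in (H : {group gT}) (k : nat) : Prop :=
  exists (g : 'I_k -> gT) (p : 'I_k -> R),
    [/\ forall i, g i \in H, probs p &
        forall z, z \in H -> subprod_law g p z = #|H|%:R^-1].

Definition mixable (H : {group gT}) : Prop := exists k, mixes_in H k.

Definition mixlen (H : {group gT}) : nat :=
  match pselect (exists k, `[< mixes_in H k >]) with
  | left ex => ex_minn ex
  | right _ => 0%N
  end.

Variable (T : finType) (to : {action gT &-> T}).

(* Left action associated with the (right) MathComp action: h . y := to y (h^-1)%g. *)
Definition lact (h : gT) (y : T) : T := to y (h^-1)%g.

Definition act_mixes_in (H : {group gT}) (Y : {set T}) (k : nat) : Prop :=
  exists2 y0, y0 \in Y &
  exists (g : 'I_k -> gT) (p : 'I_k -> R),
    [/\ forall i, g i \in H, probs p &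
        forall y, y \in Y ->
          \sum_(e : {ffun 'I_k -> bool} | lact (subprod g e) y0 == y) bern_weight p e
          = #|Y|%:R^-1].

Definition act_mixable (H : {group gT}) (Y : {set T}) : Prop :=
  exists k, act_mixes_in H Y k.

Definition act_mixlen (H : {group gT}) (Y : {set T}) : nat :=
  match pselect (exists k, `[< act_mixes_in H Y k >]) with
  | left ex => ex_minn ex
  | right _ => 0%N
  end.

End RandomSubproducts.

(* Write g.y for the left action, H for the stabilizer of x and Y = X \ x, so
   that |G| = |X| |H|.  Take a random subproduct h uniform on H, a random
   subproduct s in H with s.y1 uniform on Y, and c in G with c^-1.x = y1.
   Then s (c^-1)^eps h with eps ~ Ber(q), q = |Y| / |X|, is uniform on G: for
   eps = 0 it is uniform on H; for eps = 1 it is uniform inside the left coset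
   of H determined by the point (s c^-1).x = s.y1, which is uniform on Y, so it
   is uniform on G \ H.  The weights 1 - q and q match |H| : |G \ H|.  Such an
   s exists because 2-transitivity makes H transitive on Y, so that h itself
   moves any point of Y uniformly. *)

From HB Require Import structures.
From mathcomp Require Import all_boot all_order all_algebra all_fingroup all_solvable.
From mathcomp Require Import boolp reals.
From mathcomp Require Import ring.
Set Implicit Arguments. Unset Strict Implicit. Unset Printing Implicit Defensive.
Import Order.TTheory GRing.Theory Num.Theory.

Definition catf (A : Type) m n (a : 'I_m -> A) (b : 'I_n -> A) (i : 'I_(m + n)) : A :=
  match split i with inl j => a j | inr j => b j end.

Lemma catf_lshift (A : Type) m n (a : 'I_m -> A) (b : 'I_n -> A) i :
  catf a b (lshift n i) = a i.
Proof. by rewrite /catf (unsplitK (inl _ i)). Qed.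

Lemma catf_rshift (A : Type) m n (a : 'I_m -> A) (b : 'I_n -> A) i :
  catf a b (rshift m i) = b i.
Proof. by rewrite /catf (unsplitK (inr _ i)). Qed.

Lemma forall_catf (A : Type) (P : A -> Prop) m n (a : 'I_m -> A) (b : 'I_n -> A) :
  (forall i, P (a i)) -> (forall i, P (b i)) -> forall i, P (catf a b i).
Proof. by move=> Pa Pb i; rewrite /catf; case: split. Qed.

Definition ffun_cat m n (e : {ffun 'I_m -> bool} * {ffun 'I_n -> bool}) :
  {ffun 'I_(m + n) -> bool} := [ffun i => catf e.1 e.2 i].

Lemma ffun_cat_bij m n : bijective (@ffun_cat m n).
Proof.
exists (fun e : {ffun 'I_(m + n) -> bool} =>
  ([ffun i => e (lshift n i)], [ffun i => e (rshift m i)])).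
  by move=> [e1 e2]; congr pair; apply/ffunP => i; rewrite !ffunE ?catf_lshift ?catf_rshift.
move=> e; apply/ffunP => i; rewrite !ffunE /catf.
by case: splitP => j ij; rewrite ffunE; congr (e _); apply: val_inj; rewrite /= ij.
Qed.

Section SubproductExpectation.
Local Open Scope ring_scope.
Variables (R : realType) (gT : finGroupType).
Implicit Types (H : {group gT}) (f : gT -> R).

Definition subprod_expect k (g : 'I_k -> gT) (p : 'I_k -> R) f : R :=
  \sum_(e : {ffun 'I_k -> bool}) bern_weight p e * f (subprod g e).

Lemma subprod_mem H k (g : 'I_k -> gT) e :
  (forall i, g i \in H) -> subprod g e \in H.
Proof. by move=> gH; apply: group_prod => i _; case: (e i). Qed.

Lemma subprod_cat m n (g1 : 'I_m -> gT) (g2 : 'I_n -> gT) e1 e2 :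
  subprod (catf g1 g2) (ffun_cat (e1, e2)) = (subprod g1 e1 * subprod g2 e2)%g.
Proof.
by rewrite /subprod big_split_ord; congr (_ * _)%g; apply: eq_bigr => i _;
  rewrite ffunE /= ?catf_lshift ?catf_rshift.
Qed.

Lemma bern_weight_cat m n (p1 : 'I_m -> R) (p2 : 'I_n -> R) e1 e2 :
  bern_weight (catf p1 p2) (ffun_cat (e1, e2)) = bern_weight p1 e1 * bern_weight p2 e2.
Proof.
by rewrite /bern_weight big_split_ord; congr (_ * _); apply: eq_bigr => i _;
  rewrite ffunE /= ?catf_lshift ?catf_rshift.
Qed.

Lemma sum_bern_weight k (p : 'I_k -> R) :
  \sum_(e : {ffun 'I_k -> bool}) bern_weight p e = 1.
Proof.
rewrite /bern_weight -(bigA_distr_bigA (fun i (b : bool) => if b then p i else 1 - p i)).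
by apply: big1 => i _; rewrite big_bool /= addrC subrK.
Qed.

Lemma subprod_expect_mkcond k (g : 'I_k -> gT) p (P : pred gT) :
  \sum_(e : {ffun 'I_k -> bool} | P (subprod g e)) bern_weight p e
  = subprod_expect g p (fun u => (P u)%:R).
Proof.
rewrite /subprod_expect big_mkcond; apply: eq_bigr => e _.
by case: (P _); rewrite ?mulr1 ?mulr0.
Qed.

Lemma subprod_lawE k (g : 'I_k -> gT) p z :
  subprod_law g p z = subprod_expect g p (fun u => (u == z)%:R).
Proof. exact: subprod_expect_mkcond (pred1 z). Qed.

Lemma subprod_expect_cst k (g : 'I_k -> gT) p c : subprod_expect g p (fun => c) = c.
Proof. by rewrite /subprod_expect -big_distrl /= sum_bern_weight mul1r. Qed.

Lemma subprod_expectZ k (g : 'I_k -> gT) p a f :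
  subprod_expect g p (fun u => a * f u) = a * subprod_expect g p f.
Proof. by rewrite /subprod_expect big_distrr; apply: eq_bigr => e _; rewrite mulrCA. Qed.

Lemma eq_subprod_expect k (g : 'I_k -> gT) p f1 f2 :
  f1 =1 f2 -> subprod_expect g p f1 = subprod_expect g p f2.
Proof. by move=> f12; apply: eq_bigr => e _; rewrite f12. Qed.

Lemma eq_subprod_expect_in H k (g : 'I_k -> gT) p f1 f2 :
  (forall i, g i \in H) -> {in H, f1 =1 f2} ->
  subprod_expect g p f1 = subprod_expect g p f2.
Proof. by move=> gH f12; apply: eq_bigr => e _; rewrite f12 // subprod_mem. Qed.

Lemma subprod_expect_cat m n (g1 : 'I_m -> gT) (g2 : 'I_n -> gT) p1 p2 f :
  subprod_expect (catf g1 g2) (catf p1 p2) f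
  = subprod_expect g1 p1 (fun u => subprod_expect g2 p2 (fun v => f (u * v)%g)).
Proof.
rewrite /subprod_expect (reindex _ (onW_bij _ (@ffun_cat_bij m n))) /=.
rewrite -(pair_bigA _ (fun e1 e2 => bern_weight (catf p1 p2) (ffun_cat (e1, e2))
                        * f (subprod (catf g1 g2) (ffun_cat (e1, e2))))) /=.
apply: eq_bigr => e1 _; rewrite big_distrr; apply: eq_bigr => e2 _.
by rewrite subprod_cat bern_weight_cat -mulrA.
Qed.

Lemma subprod_expect_ord1 (g : 'I_1 -> gT) p f :
  subprod_expect g p f = (1 - p ord0) * f 1%g + p ord0 * f (g ord0).
Proof.
have bij_ffun1 : bijective (fun b : bool => [ffun _ : 'I_1 => b]).
  exists (fun e : {ffun 'I_1 -> bool} => e ord0) => [b | e]; first by rewrite ffunE.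
  by apply/ffunP => i; rewrite !ffunE (ord1 i).
rewrite /subprod_expect (reindex _ (onW_bij _ bij_ffun1)) big_bool addrC.
by rewrite /bern_weight /subprod !big_ord1 !ffunE.
Qed.

Section Uniform.
Variables (H : {group gT}) (k : nat) (g : 'I_k -> gT) (p : 'I_k -> R).
Hypotheses (gH : forall i, g i \in H)
           (unifH : forall z, z \in H -> subprod_law g p z = #|H|%:R^-1).

Lemma subprod_expect_uniform f :
  subprod_expect g p f = #|H|%:R^-1 * \sum_(z in H) f z.
Proof.
rewrite /subprod_expect (partition_big (subprod g) predT) //= (bigID (mem H)) /=.
rewrite [X in _ + X]big1 ?addr0 => [|z zH]; last first.
  by rewrite big_pred0 // => e; apply: contraNF zH => /eqP <-; apply: subprod_mem.
rewrite big_distrr; apply: eq_bigr => z zH.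
by rewrite -(unifH zH) /subprod_law big_distrl; apply: eq_bigr => e /eqP ->.
Qed.

Lemma subprod_expect_uniform_eq w z :
  subprod_expect g p (fun t => ((w * t)%g == z)%:R) = #|H|%:R^-1 * ((w^-1 * z)%g \in H)%:R.
Proof.
rewrite subprod_expect_uniform; congr (_ * _).
rewrite big_mkcond (bigD1 (w^-1 * z)%g) //= mulKVg eqxx big1 ?addr0 => [|t tw].
  by case: (_ \in H).
by rewrite (can2_eq (mulKg w) (mulKVg w)) (negbTE tw); case: (t \in H).
Qed.

End Uniform.
End SubproductExpectation.

Section MinimalLength.
Variables (R : realType) (gT : finGroupType) (T : finType) (to : {action gT &-> T}).
Implicit Types (H : {group gT}) (Y : {set T}).

Lemma mixlen_mixes H : mixable R H -> mixes_in R H (mixlen R H).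
Proof.
move=> [k Hk]; rewrite /mixlen; case: pselect => [ex | []]; last by exists k; apply/asboolP.
by case: ex_minnP => m /asboolP.
Qed.

Lemma mixlen_min H k : mixes_in R H k -> mixlen R H <= k.
Proof.
move=> Hk; rewrite /mixlen; case: pselect => [ex | []]; last by exists k; apply/asboolP.
by case: ex_minnP => m _; apply; apply/asboolP.
Qed.

Lemma act_mixlen_mixes H Y :
  act_mixable R to H Y -> act_mixes_in R to H Y (act_mixlen R to H Y).
Proof.
move=> [k Hk]; rewrite /act_mixlen; case: pselect => [ex | []]; last by exists k; apply/asboolP.
by case: ex_minnP => m /asboolP.
Qed.

End MinimalLength.

Section TransitiveAction.
Local Open Scope ring_scope.
Variables (R : realType) (gT : finGroupType) (T : finType) (to : {action gT &-> T}).

Lemma mixes_in_act (H : {group gT}) (Y : {set T}) y0 k :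
  [transitive H, on Y | to] -> y0 \in Y -> mixes_in R H k -> act_mixes_in R to H Y k.
Proof.
move=> trH y0Y [g [p [gH pr unifH]]]; exists y0 => //; exists g, p; split => // y yY.
rewrite (subprod_expect_mkcond g p (fun u => lact to u y0 == y)).
rewrite (subprod_expect_uniform gH unifH).
have /orbitP[c cH <-] : y \in orbit to H y0 by rewrite (atransP trH).
have -> : \sum_(u in H) ((lact to u y0 == to y0 c)%:R : R) = #|amove to H y0 (to y0 c)|%:R.
  rewrite -sum1_card natr_sum (reindex_inj invg_inj) big_mkcond [RHS]big_mkcond /=.
  by apply: eq_bigr => u _; rewrite /lact invgK inE groupV; case: (_ \in H); case: eqP.
have := card_orbit_stab to H y0; rewrite (atransP trH _ y0Y) => cardH.
rewrite amove_act ?subsetT // card_rcoset -cardH natrM invfM divfK //.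
by rewrite pnatr_eq0 -lt0n cardG_gt0.
Qed.

End TransitiveAction.

Section StabilizerExtension.
Local Open Scope ring_scope.
Variables (R : realType) (gT : finGroupType) (T : finType) (to : {action gT &-> T}).
Variables (G : {group gT}) (X : {set T}) (x : T).
Hypotheses (trG : [transitive G, on X | to]) (xX : x \in X).
Local Notation H := 'C_G[x | to]%G.

Lemma card_transitive_stab : #|G| = (#|X| * #|H|)%N.
Proof. by rewrite -(card_orbit_stab to G x) (atransP trG). Qed.

Lemma mem_stabE w : w \in G -> (w \in H) = (to x w == x).
Proof. by move=> wG; rewrite in_setI wG; apply/astab1P/eqP. Qed.

Lemma act_notin_stab z : z \in G -> z \notin H -> to x z^-1%g \in X :\ x.
Proof.
move=> zG zH; rewrite !inE -(atransP trG _ xX) mem_orbit ?groupV // andbT.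
by apply: contra zH => /eqP zx; rewrite -groupV mem_stabE ?groupV ?zx.
Qed.

Lemma mem_stab_lact c u z : c \in G -> u \in G -> z \in G ->
  ((u * c^-1)^-1 * z \in H)%g = (lact to u (to x c) == to x z^-1%g).
Proof.
move=> cG uG zG; rewrite invMg invgK mem_stabE ?groupM ?groupV // /lact -!actM.
by rewrite (actM to x _ z) (can2_eq (actK to z) (actKV to z)).
Qed.

Variables (k : nat) (h : 'I_k -> gT) (ph : 'I_k -> R).
Hypotheses (hH : forall i, h i \in H) (ph_probs : probs ph)
           (unifH : forall z, z \in H -> subprod_law h ph z = #|H|%:R^-1).
Variables (m : nat) (y1 : T) (s : 'I_m -> gT) (ps : 'I_m -> R).
Hypotheses (y1Y : y1 \in X :\ x) (sH : forall i, s i \in H) (ps_probs : probs ps)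
           (unifY : forall y, y \in X :\ x ->
              \sum_(e : {ffun 'I_m -> bool} | lact to (subprod s e) y1 == y) bern_weight ps e
              = #|X :\ x|%:R^-1).
Variable c : gT.
Hypotheses (cG : c \in G) (cx : to x c = y1).

Let q : R := #|X :\ x|%:R / #|X|%:R.
Let lift_gens := catf (catf s (fun _ : 'I_1 => c^-1)%g) h.
Let lift_probs := catf (catf ps (fun _ : 'I_1 => q)) ph.

Lemma lift_lawE z : subprod_law lift_gens lift_probs z =
  subprod_expect s ps (fun u => (1 - q) * (#|H|%:R^-1 * ((u^-1 * z)%g \in H)%:R)
                               + q * (#|H|%:R^-1 * (((u * c^-1)^-1 * z)%g \in H)%:R)).
Proof.
rewrite subprod_lawE subprod_expect_cat.
rewrite (eq_subprod_expect _ _ (fun w => subprod_expect_uniform_eq hH unifH w z)).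
by rewrite subprod_expect_cat; apply: eq_subprod_expect => u; rewrite subprod_expect_ord1 mulg1.
Qed.

Lemma cardXD1 : #|X| = (#|X :\ x| + 1)%N.
Proof. by rewrite (cardsD1 x X) xX addnC. Qed.

Lemma lift_law_uniform z : z \in G -> subprod_law lift_gens lift_probs z = #|G|%:R^-1.
Proof.
move=> zG; have [y1x y1X] := setD1P y1Y.
have nY0 : #|X :\ x|%:R != 0 :> R by rewrite pnatr_eq0 -lt0n; apply/card_gt0P; exists y1.
have nH0 : #|H|%:R != 0 :> R by rewrite pnatr_eq0 -lt0n cardG_gt0.
have nX0 : #|X :\ x|%:R + 1 != 0 :> R by rewrite -(natrD _ _ 1) pnatr_eq0 addn1.
rewrite lift_lawE card_transitive_stab cardXD1 natrM natrD.
have cNH : (c \in H) = false by rewrite mem_stabE // cx (negbTE y1x).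
have [zH | zNH] := boolP (z \in H).
  rewrite (eq_subprod_expect_in (f2 := fun => (1 - q) * #|H|%:R^-1) _ sH) ?subprod_expect_cst.
    by rewrite /q cardXD1 natrD; field; rewrite nH0 nX0.
  move=> u uH /=; rewrite groupM ?groupV // invMg invgK -mulgA groupMr ?groupM ?groupV //.
  by rewrite cNH /= mulr1 !mulr0 addr0.
rewrite (eq_subprod_expect_in
  (f2 := fun u => q * #|H|%:R^-1 * (lact to u y1 == to x z^-1%g)%:R) _ sH).
  rewrite subprod_expectZ -(subprod_expect_mkcond s ps (fun u => lact to u y1 == to x z^-1%g)).
  by rewrite unifY ?act_notin_stab // /q cardXD1 natrD; field; rewrite nH0 nX0 nY0.
move=> u uH /=; have uG : u \in G by case/setIP: uH.
by rewrite mem_stab_lact // cx groupMl ?groupV // (negbTE zNH) /= !mulr0 add0r mulrA.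
Qed.

Lemma lift_mixes : mixes_in R G (m + 1 + k).
Proof.
have inG w : w \in H -> w \in G by case/setIP.
exists lift_gens, lift_probs; split; last exact: lift_law_uniform.
- apply: (forall_catf (P := fun w => w \in G)) => [|i]; last exact/inG/hH.
  by apply: (forall_catf (P := fun w => w \in G)) => [i | _]; [exact/inG/sH | rewrite groupV].
- apply: (forall_catf (P := fun r => 0 <= r <= 1)) => //.
  apply: (forall_catf (P := fun r => 0 <= r <= 1)) => // _.
  have X_gt0 : 0 < #|X|%:R :> R by rewrite ltr0n card_gt0; apply/set0Pn; exists x.
  by rewrite divr_ge0 //= ler_pdivrMr // mul1r ler_nat subset_leq_card ?subD1set.
Qed.

End StabilizerExtension.

Lemma mixes_in_transitive_stab (R : realType) (gT : finGroupType) (T : finType)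
    (to : {action gT &-> T}) (G : {group gT}) (X : {set T}) (x : T) (k m : nat) :
  [transitive G, on X | to] -> x \in X ->
  mixes_in R 'C_G[x | to]%G k -> act_mixes_in R to 'C_G[x | to]%G (X :\ x) m ->
  mixes_in R G (m + 1 + k).
Proof.
move=> trG xX [h [ph [hH ph01 unifH]]] [y1 y1Y [s [ps [sH ps01 unifY]]]].
have /orbitP[c cG cx] : y1 \in orbit to G x by rewrite (atransP trG) //; case/setD1P: y1Y.
exact: (lift_mixes trG xX hH ph01 unifH y1Y sH ps01 unifY cG cx).
Qed.

Unset Implicit Arguments.
Set Strict Implicit.

Theorem mainTheorem16 (R : realType) (gT : finGroupType) (G : {group gT})
    (T : finType) (to : {action gT &-> T}) (X : {set T}) (x : T) :
  [transitive^2 G, on X | to] -> x \in X ->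
  mixable R 'C_G[x | to]%G ->
  mixable R G /\
  (mixlen R G <= mixlen R 'C_G[x | to]%G
                 + act_mixlen R to 'C_G[x | to]%G (X :\ x) + 1)%N.
Proof.
move=> tr2G xX mixH.
have trG : [transitive G, on X | to] := ntransitive1 (isT : 0 < 2)%N tr2G.
have trH : [transitive 'C_G[x | to], on X :\ x | to] :=
  ntransitive1 (isT : 0 < 1)%N (stab_ntransitive (isT : 0 < 1)%N xX tr2G).
have /imsetP[y0 y0Y _] := trH.
have mixH_act : act_mixable R to 'C_G[x | to]%G (X :\ x).
  by exists (mixlen R 'C_G[x | to]%G); apply: mixes_in_act trH y0Y (mixlen_mixes mixH).
have mixG := mixes_in_transitive_stab trG xX (mixlen_mixes mixH) (act_mixlen_mixes mixH_act).
split; first exact: ex_intro _ _ mixG.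
by rewrite (leq_trans (mixlen_min mixG)) // addnC addnA.
Qed.
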